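(* Let $P$ be a finite point set and $C$ a convex body in the plane, and let $\Pi$ be a convex polygon with $P\cap C\subseteq\Pi\subseteq C$. Then there is a convex polygon $\Pi'$ such that (A) $P\cap C\subseteq\Pi'\subseteq\Pi$; (B) the number of vertices of $\Pi'$ is at most twice the number of vertices of $\Pi$; and (C) every edge of $\Pi'$ lies on a line passing through two points of $P$. *)

(* Points of the plane are pairs (x, y) : R * R
   over an arbitrary R : realType; the topology on R * R is the product topology
   (= Euclidean topology of the plane). *)
From HB Require Import structures.
From mathcomp Require Import all_boot all_order all_algebra.
From mathcomp Require Import all_classical all_reals all_analysis.
Set Implicit Arguments. Unset Strict Implicit. Unset Printing Implicit Defensive.
Import Order.TTheory GRing.Theory Num.Theory.
Local Open Scope classical_set_scope.
Local Open Scope ring_scope.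

Section Plane.
Variable R : realType.
Local Notation pt := (R^o * R^o)%type.

Definition pcomb (t : R) (a b : pt) : pt :=
  (t * a.1 + (1 - t) * b.1, t * a.2 + (1 - t) * b.2).

Definition pconvex (S : set pt) : Prop :=
  forall a b t, S a -> S b -> 0 <= t <= 1 -> S (pcomb t a b).

Definition convex_body (C : set pt) : Prop :=
  pconvex C /\ compact C /\ interior C !=set0.

Definition phull (V : seq pt) : set pt :=
  [set x | exists w : 'I_(size V) -> R,
     (forall i, 0 <= w i) /\ \sum_(i < size V) w i = 1 /\
     x = (\sum_(i < size V) w i * (V`_i).1, \sum_(i < size V) w i * (V`_i).2)].

Definition extreme_pt (S : set pt) (x : pt) : Prop :=
  S x /\ forall a b t, S a -> S b -> 0 < t < 1 -> x = pcomb t a b -> a = b.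

(* V is the (duplicate-free) list of vertices of the convex polygon phull V:
   every point of V is an extreme point of phull V (the extreme points of phull V
   always belong to V).  The number of vertices of phull V is then size V. *)
Definition polygon_vertices (V : seq pt) : Prop :=
  uniq V /\ forall v, v \in V -> extreme_pt (phull V) v.

Definition poly_edge (Q : set pt) (a b : pt) : Prop :=
  a <> b /\ extreme_pt Q a /\ extreme_pt Q b /\
  exists (u : pt) (c : R), u <> (0, 0) /\
    u.1 * a.1 + u.2 * a.2 = c /\ u.1 * b.1 + u.2 * b.2 = c /\
    forall x, Q x -> u.1 * x.1 + u.2 * x.2 <= c.

Definition on_line (p q x : pt) : Prop :=
  (q.1 - p.1) * (x.2 - p.2) - (q.2 - p.2) * (x.1 - p.1) = 0.

End Plane.
Notation pt R := (R^o * R^o)%type.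

From HB Require Import structures.
From mathcomp Require Import all_boot all_order all_algebra.
From mathcomp Require Import all_classical all_reals all_analysis.
From mathcomp Require Import ring lra.
Set Implicit Arguments. Unset Strict Implicit. Unset Printing Implicit Defensive.
Import Order.TTheory GRing.Theory Num.Theory.
Local Open Scope classical_set_scope.
Local Open Scope ring_scope.

(* Let S be the points of P in C and W the vertices of conv S.  If S is
   collinear, W has at most two points and is the required polygon.  Otherwise,
   for every vertex a of Pi with successor a', let w be the vertex of W lowest
   with respect to the line a a'; the two edges of conv W at w bound a wedge
   lying to the left of a a'.  The 2|Pi| half-planes obtained in this way contain
   W, and their intersection K lies in Pi, since a point to the left of every
   edge of a convex polygon lies in it.  K is a bounded polygon whose edges lie
   on these 2|Pi| lines through two points of P; each vertex of K lies on two of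
   the lines and each line carries at most two vertices, so K has at most 2|Pi|
   vertices. *)

Lemma seq_argmin (d : Order.disp_t) (O : orderType d) (T : eqType) (f : T -> O) (s : seq T) :
  s != [::] -> exists2 m, m \in s & forall x, x \in s -> (f m <= f x)%O.
Proof.
elim: s => [//|a s IH] _; have [->|sn] := eqVneq s [::].
  by exists a; rewrite ?mem_head // => x; rewrite inE => /eqP ->.
have [m ms hm] := IH sn; have [fam|fma] := leP (f a) (f m).
  exists a; first exact: mem_head.
  by move=> x; rewrite inE => /orP[/eqP ->//|/hm]; apply: le_trans.
exists m; first by rewrite inE ms orbT.
by move=> x; rewrite inE => /orP[/eqP ->|/hm //]; apply: ltW.
Qed.

Lemma sub_in_count (T : eqType) (a b : pred T) (s : seq T) :
  {in s, subpred a b} -> (count a s <= count b s)%N.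
Proof.
elim: s => [//|y s IH] h /=; rewrite leq_add ?IH //; last first.
  by move=> x xs; apply: h; rewrite inE xs orbT.
by case ay: (a y) => //; rewrite (h y) // inE eqxx.
Qed.

Lemma sub_in_count_lt (T : eqType) (a b : pred T) (s : seq T) :
  {in s, subpred a b} -> (exists2 x, x \in s & b x && ~~ a x) -> (count a s < count b s)%N.
Proof.
elim: s => [|y s IH] h [x]; first by [].
have h' : {in s, subpred a b} by move=> z zs; apply: h; rewrite inE zs orbT.
rewrite inE => /orP[/eqP ->|xs] /andP[bx ax] /=.
  by rewrite (negbTE ax) bx add0n add1n ltnS sub_in_count.
rewrite -addnS leq_add ?IH //; last by exists x; rewrite ?bx.
by case ay: (a y) => //; rewrite (h y) // inE eqxx.
Qed.

Lemma count_ge2 (T : eqType) (a : pred T) (s : seq T) x y : x != y -> x \in s -> y \in s ->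
  a x -> a y -> (2 <= count a s)%N.
Proof.
move=> xy; elim: s => [//|z s IH]; rewrite !inE => /orP[/eqP xz|xs] /orP[/eqP yz|ys] ax ay /=.
- by move: xy; rewrite xz yz eqxx.
- by rewrite -xz ax add1n ltnS -has_count; apply/hasP; exists y.
- by rewrite -yz ay add1n ltnS -has_count; apply/hasP; exists x.
- exact: leq_trans (IH xs ys ax ay) (leq_addl _ _).
Qed.

Lemma double_count (A B : eqType) (s : seq A) (t : seq B) (r : A -> B -> bool) m n :
  (forall x, x \in s -> m <= count (r x) t)%N -> (forall y, y \in t -> count (r^~ y) s <= n)%N ->
  (m * size s <= n * size t)%N.
Proof.
move=> hs ht.
have count_sum (I : Type) (a : pred I) (u : seq I) : count a u = (\sum_(i <- u) a i)%N.
  by elim: u => [|i u IH]; rewrite ?big_nil ?big_cons //= IH.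
apply: (@leq_trans (\sum_(x <- s) count (r x) t)).
  rewrite -sum1_size big_distrr /= big_seq [X in (_ <= X)%N]big_seq.
  by apply: leq_sum => x xs; rewrite muln1 hs.
under eq_bigr => x _ do rewrite count_sum.
rewrite exchange_big /=.
under eq_bigr => y _ do rewrite -(count_sum _ (r^~ y)).
rewrite -sum1_size big_distrr /= big_seq [X in (_ <= X)%N]big_seq.
by apply: leq_sum => y yt; rewrite muln1 ht.
Qed.

Lemma choose_pairs_seq (A B : eqType) (P : B -> Prop) (Q : A -> B -> B -> Prop) (s : seq A) :
  (forall x, x \in s -> exists b1 b2, [/\ P b1, P b2 & Q x b1 b2]) ->
  exists J : seq B, [/\ size J = (2 * size s)%N, forall b, b \in J -> P b &
    forall x, x \in s -> exists b1 b2, [/\ b1 \in J, b2 \in J & Q x b1 b2]].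
Proof.
elim: s => [|x s IH] h; first by exists [::].
have [|J [sJ PJ QJ]] := IH; first by move=> y ys; apply: h; rewrite inE ys orbT.
have [b1 [b2 [P1 P2 Q12]]] := h x (mem_head _ _).
exists [:: b1, b2 & J]; split; first by rewrite /= sJ mulnS.
  by move=> b; rewrite !inE => /orP[/eqP ->|/orP[/eqP ->|/PJ]].
move=> y; rewrite inE => /orP[/eqP ->|/QJ[c1 [c2 [c1J c2J Qc]]]].
  by exists b1, b2; rewrite !inE !eqxx ?orbT.
by exists c1, c2; rewrite !inE c1J c2J !orbT.
Qed.

Section Plane.
Variable R : realType.
Local Notation point := (pt R).

Lemma pt_ext (a b : point) : a.1 = b.1 -> a.2 = b.2 -> a = b.
Proof. by case: a b => [? ?] [? ?] /= -> ->. Qed.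

Lemma pcomb0 (a b : point) : pcomb 0 a b = b.
Proof. by apply: pt_ext; rewrite /= mul0r add0r subr0 mul1r. Qed.

Lemma pcomb1 (a b : point) : pcomb 1 a b = a.
Proof. by apply: pt_ext; rewrite /= mul1r subrr mul0r addr0. Qed.

Lemma pcombxx t (a : point) : pcomb t a a = a.
Proof. by apply: pt_ext; rewrite /= -mulrDl addrC subrK mul1r. Qed.

Definition affine_map (f : point -> R) :=
  forall t a b, f (pcomb t a b) = t * f a + (1 - t) * f b.

Lemma affine_pconvex_ge (f : point -> R) c : affine_map f -> pconvex [set z | c <= f z].
Proof. by move=> af a b t /= ha hb /andP[t0 t1]; rewrite af; nra. Qed.

Lemma affine_pconvex_eq (f : point -> R) c : affine_map f -> pconvex [set z | f z = c].
Proof. by move=> af a b t /= ha hb _; rewrite af ha hb; ring. Qed.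

(* Twice the signed area of the triangle [p q z]: positive iff [z] lies to the
   left of the line through [p] and [q] oriented from [p] to [q];
   [on_line p q z] is [orient p q z = 0]. *)
Definition orient (p q z : point) : R :=
  (q.1 - p.1) * (z.2 - p.2) - (q.2 - p.2) * (z.1 - p.1).

Lemma orient_affine p q : affine_map (orient p q).
Proof. by move=> t a b; rewrite /orient /=; ring. Qed.

Lemma orient_pp (p q : point) : orient p q p = 0.
Proof. by rewrite /orient; ring. Qed.

Lemma orient_qq (p q : point) : orient p q q = 0.
Proof. by rewrite /orient; ring. Qed.

Lemma orient_swapl (p q z : point) : orient q p z = - orient p q z.
Proof. by rewrite /orient; ring. Qed.

Lemma orient_swapr (p q z : point) : orient p z q = - orient p q z.
Proof. by rewrite /orient; ring. Qed.

Definition ray (s a : point) (mu : R) : point :=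
  (s.1 + mu * (a.1 - s.1), s.2 + mu * (a.2 - s.2)).

Lemma orient_ray (s a z : point) mu : orient s (ray s a mu) z = mu * orient s a z.
Proof. by rewrite /orient /ray /=; ring. Qed.

Lemma ray_ray (s a : point) l m : ray s (ray s a l) m = ray s a (l * m).
Proof. by apply: pt_ext; rewrite /ray /=; ring. Qed.

Lemma ray1 (s a : point) : ray s a 1 = a.
Proof. by apply: pt_ext; rewrite /ray /=; ring. Qed.

Lemma ray0 (s a : point) : ray s a 0 = s.
Proof. by apply: pt_ext; rewrite /ray /= mul0r addr0. Qed.

(** * Convex hulls of finite point sets *)

Lemma phull_nil (z : point) : ~ phull [::] z.
Proof. by move=> [w [_ [+ _]]]; rewrite big_ord0 => /eqP; rewrite eq_sym oner_eq0. Qed.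

Lemma phull_consP (t : point) T z : phull (t :: T) z ->
  z = t \/ exists l y, [/\ 0 <= l <= 1, phull T y & z = pcomb l t y].
Proof.
move=> [w [w0 [w1 ->]]]; rewrite /= !big_ord_recl /= in w1 *.
set l := w ord0 in w1 *; set rest := \sum_(i < size T) w (lift ord0 i) in w1.
have rest_eq : rest = 1 - l by rewrite -w1 addrC addKr.
have [l1|l1] := eqVneq l 1.
  left; have w_rest0 i : w (lift ord0 i) = 0.
    apply/eqP; move: rest_eq; rewrite l1 subrr => /eqP.
    by rewrite psumr_eq0 // => /allP/(_ i (mem_index_enum _)).
  by apply: pt_ext; rewrite /= l1 big1 ?addr0 ?mul1r // => i _; rewrite w_rest0 mul0r.
right; have l0 : 0 <= l by apply: w0.
have lt1 : l < 1 by rewrite lt_neqAle l1 -w1 lerDl sumr_ge0.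
have hl : 1 - l != 0 by rewrite subr_eq0 eq_sym.
exists l, ((1 - l)^-1 * \sum_(i < size T) w (lift ord0 i) * (T`_i).1,
           (1 - l)^-1 * \sum_(i < size T) w (lift ord0 i) * (T`_i).2).
split; first by rewrite l0 ltW.
- exists (fun i => (1 - l)^-1 * w (lift ord0 i)); split.
    by move=> i; rewrite mulr_ge0 // invr_ge0 subr_ge0 ltW.
  split; first by rewrite -mulr_sumr -/rest rest_eq mulVf.
  by congr (_, _); rewrite mulr_sumr; apply: eq_bigr => i _; rewrite mulrA.
- by rewrite /pcomb /=; congr (_, _); rewrite mulrA mulfV // mul1r.
Qed.

Lemma phull_consI (t : point) T z :
  (z = t \/ exists l y, [/\ 0 <= l <= 1, phull T y & z = pcomb l t y]) ->
  phull (t :: T) z.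
Proof.
have lift_neq0 (i : 'I_(size T)) : (lift ord0 i == ord0) = false.
  by rewrite eq_sym (negbTE (neq_lift _ _)).
case=> [->|[l [y [/andP[l0 l1] [w [w0 [w1 ->]]] ->]]]].
  exists (fun i : 'I_(size T).+1 => (i == ord0)%:R); split; first by move=> i; rewrite ler0n.
  rewrite /= !big_ord_recl /= !big1 ?addr0 ?mul1r => [|i _|i _|i _]; rewrite ?lift_neq0 ?mul0r //.
  by split=> //; case: (t).
exists (fun i : 'I_(size T).+1 => if unlift ord0 i is Some j then (1 - l) * w j else l).
split.
  by move=> i; case: unlift => [j|] //; rewrite mulr_ge0 ?subr_ge0.
rewrite /= !big_ord_recl /= unlift_none; split.
  under eq_bigr => i _ do rewrite liftK.
  by rewrite -mulr_sumr w1 mulr1 addrC subrK.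
rewrite /pcomb /=; congr (_, _); rewrite mulr_sumr; congr (_ + _);
  by apply: eq_bigr => i _; rewrite liftK mulrA.
Qed.

Lemma phull_mem (T : seq point) z : z \in T -> phull T z.
Proof.
elim: T => [//|t T IH]; rewrite inE => /orP[/eqP ->|/IH h]; apply: phull_consI; first by left.
by right; exists 0, z; rewrite lexx ler01 pcomb0.
Qed.

Lemma phull_convex (T : seq point) : pconvex (phull T).
Proof.
move=> a b t [wa [wa0 [wa1 ->]]] [wb [wb0 [wb1 ->]]] /andP[t0 t1].
exists (fun i => t * wa i + (1 - t) * wb i); split.
  by move=> i; rewrite addr_ge0 // mulr_ge0 // subr_ge0.
split; first by rewrite big_split /= -!mulr_sumr wa1 wb1 !mulr1 addrC subrK.
by apply: pt_ext; rewrite /= !mulr_sumr -big_split /=; apply: eq_bigr => i _; ring.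
Qed.

Lemma phull_min (X : set point) T : pconvex X -> (forall z, z \in T -> X z) -> phull T `<=` X.
Proof.
move=> cX; elim: T => [|t T IH] TX z; first by move/phull_nil.
have Xt : X t by apply: TX; rewrite inE eqxx.
case/phull_consP => [->//|[l [y [l01 hy ->]]]]; apply: cX => //.
by apply: IH hy => w wT; apply: TX; rewrite inE wT orbT.
Qed.

Lemma phull_subset (T T' : seq point) : {subset T <= T'} -> phull T `<=` phull T'.
Proof. by move=> sTT'; apply: phull_min (@phull_convex T') _ => z /sTT' /phull_mem. Qed.

Lemma phull_notin_split (T : seq point) z : phull T z -> z \notin T ->
  exists a b t, [/\ phull T a, phull T b, a <> b, 0 < t < 1 & z = pcomb t a b].
Proof.
elim: T z => [z /phull_nil //|t T IH] z /phull_consP.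
have sub : {subset T <= t :: T} by move=> w wT; rewrite inE wT orbT.
rewrite inE negb_or => -[->|[l [y [/andP[l0 l1] hy ->]]]]; first by rewrite eqxx.
move=> /andP[zt zT]; have [l0e|l0'] := eqVneq l 0.
  rewrite l0e pcomb0 in zt zT *.
  have [a [b [s [ha hb ab s01 ->]]]] := IH y hy zT.
  by exists a, b, s; split => //; apply: (phull_subset sub).
have [l1e|l1'] := eqVneq l 1; first by rewrite l1e pcomb1 eqxx in zt.
exists t, y, l; split => //.
- by apply: phull_mem; rewrite inE eqxx.
- exact: (phull_subset sub).
- by move=> ty; move: zt; rewrite ty pcombxx eqxx.
- by rewrite lt_neqAle eq_sym l0' l0 lt_neqAle l1' l1.
Qed.

Lemma mem_extreme_phull (T : seq point) z : extreme_pt (phull T) z -> z \in T.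
Proof.
move=> [hz ext]; apply/negPn/negP => zT.
have [a [b [t [ha hb ab t01 e]]]] := phull_notin_split hz zT.
exact/ab/(ext a b t).
Qed.

Lemma phull_split_at (p : point) T z : phull T z ->
  z = p \/ exists a y, [/\ 0 <= a < 1, phull [seq x <- T | x != p] y & z = pcomb a p y].
Proof.
elim: T z => [z /phull_nil //|t T IH] z /phull_consP.
case=> [->|[l [y0 [/andP[l0 l1] hy0 ->]]]].
  have [->|tp] := eqVneq t p; first by left.
  right; exists 0, t; rewrite lexx ltr01 pcomb0; split => //.
  by apply: phull_mem; rewrite /= tp inE eqxx.
have [->|tp] := eqVneq t p; rewrite /= ?eqxx ?tp.
  case: (IH _ hy0) => [->|[b [y1 [/andP[b0 b1] hy1 ->]]]]; first by left; rewrite pcombxx.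
  have [l1e|l1'] := eqVneq l 1; first by left; rewrite l1e pcomb1.
  have l1s : l < 1 by rewrite lt_neqAle l1' l1.
  right; exists (l + (1 - l) * b), y1; split => //; first by apply/andP; split; nra.
  by apply: pt_ext => /=; ring.
case: (IH _ hy0) => [->|[b [y1 [/andP[b0 b1] hy1 ->]]]].
  have [l0e|l0'] := eqVneq l 0; first by left; rewrite l0e pcomb0.
  have l0s : 0 < l by rewrite lt_neqAle eq_sym l0' l0.
  right; exists (1 - l), t; split; first by apply/andP; split; lra.
    by apply: phull_mem; rewrite inE eqxx.
  by apply: pt_ext => /=; ring.
have hD : 0 < 1 - (1 - l) * b by nra.
right; exists ((1 - l) * b), (pcomb (l / (1 - (1 - l) * b)) t y1); split.
- by apply/andP; split; nra.
- apply: phull_consI; right; exists (l / (1 - (1 - l) * b)), y1; split => //.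
  by rewrite divr_ge0 ?(ltW hD) //= ler_pdivrMr // mul1r; nra.
- by apply: pt_ext => /=; field; rewrite gt_eqF.
Qed.

Lemma pcomb_fixl (p y : point) s : s < 1 -> p = pcomb s p y -> p = y.
Proof.
move=> s1 e; have s0 : 1 - s != 0 by rewrite subr_eq0 gt_eqF.
have := congr1 fst e; have := congr1 snd e; rewrite /= => e2 e1.
by apply: pt_ext; apply: (mulfI s0); nra.
Qed.

Lemma phull_filter_nonextreme (p : point) T a b t : phull T a -> phull T b ->
  0 < t < 1 -> p = pcomb t a b -> a <> b -> phull [seq x <- T | x != p] p.
Proof.
move=> ha hb /andP[t0 t1] e ab.
case: (phull_split_at p ha) => [ea|[al [y [/andP[al0 al1] hy ea]]]];
case: (phull_split_at p hb) => [eb|[be [y' [/andP[be0 be1] hy' eb]]]].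
- by case: ab; rewrite ea eb.
- suff e' : p = y' by move: hy'; rewrite -e'.
  apply: (@pcomb_fixl _ _ (t + (1 - t) * be)); first nra.
  by rewrite {1}e ea eb; apply: pt_ext => /=; ring.
- suff e' : p = y by move: hy; rewrite -e'.
  apply: (@pcomb_fixl _ _ (1 - t * (1 - al))); first nra.
  by rewrite {1}e ea eb; apply: pt_ext => /=; ring.
- set A := t * (1 - al); set B := (1 - t) * (1 - be).
  have A0 : 0 < A by apply: mulr_gt0; lra.
  have B0 : 0 < B by apply: mulr_gt0; lra.
  have D0 : A + B != 0 by rewrite gt_eqF // addr_gt0.
  have [e1 e2] : (A + B) * p.1 = A * y.1 + B * y'.1 /\ (A + B) * p.2 = A * y.2 + B * y'.2.
    have [k1 k2] : p.1 = (pcomb t a b).1 /\ p.2 = (pcomb t a b).2 by rewrite -e.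
    by move: k1 k2; rewrite ea eb /= /A /B => k1 k2; split; nra.
  have e' : p = pcomb (A / (A + B)) y y'.
    by apply: pt_ext; apply: (mulfI D0); rewrite /= ?e1 ?e2; field.
  rewrite [X in phull _ X]e'; apply: phull_convex => //.
  apply/andP; split; first by apply: divr_ge0; apply: ltW; rewrite ?addr_gt0.
  by rewrite ler_pdivrMr ?mul1r ?addr_gt0 // lerDl ltW.
Qed.

Lemma extreme_or_phull_filter (T : seq point) p : p \in T ->
  extreme_pt (phull T) p \/ phull [seq x <- T | x != p] p.
Proof.
move=> pT; case: (pselect (phull [seq x <- T | x != p] p)) => [|h]; [by right | left].
split => [|a b t ha hb ht e]; first exact: phull_mem.
by apply: contrapT => ab; exact/h/(phull_filter_nonextreme ha hb ht e).
Qed.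

Lemma phull_filter_eq (T : seq point) p :
  phull [seq x <- T | x != p] p -> phull [seq x <- T | x != p] = phull T.
Proof.
move=> hp; rewrite eqEsubset; split.
  by apply: phull_subset => x; rewrite mem_filter => /andP[].
apply: phull_min (@phull_convex _) _ => x xT; have [->//|xp] := eqVneq x p.
by apply: phull_mem; rewrite mem_filter xp.
Qed.

Lemma size_filter_neq (T : seq point) p : p \in T -> (size [seq x <- T | x != p] < size T)%N.
Proof.
move=> pT; rewrite size_filter -(count_predC (predC1 p) T) -addn1 leq_add2l.
by rewrite lt0n -lt0n -has_count; apply/hasP; exists p => //=; rewrite eqxx.
Qed.

Definition vertices (T : seq point) : seq point :=
  undup [seq z <- T | `[< extreme_pt (phull T) z >]].

Lemma mem_vertices (T : seq point) z :
  (z \in vertices T) = (z \in T) && `[< extreme_pt (phull T) z >].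
Proof. by rewrite mem_undup mem_filter andbC. Qed.

Lemma vertices_sub (T : seq point) : {subset vertices T <= T}.
Proof. by move=> x; rewrite mem_vertices => /andP[]. Qed.

Lemma phull_vertices_mem (T : seq point) z : z \in T -> phull (vertices T) z.
Proof.
elim: {T}(size T) {-2}T (leqnn (size T)) z => [|n IH] T hT z zT.
  by move: hT zT; rewrite leqn0 => /nilP ->.
case: (pselect (forall p, p \in T -> extreme_pt (phull T) p)) => [allE|].
  by apply: phull_mem; rewrite mem_vertices zT; apply/asboolP/allE.
move=> /existsNP[p /not_implyP[pT pne]].
have {pne} hp : phull [seq x <- T | x != p] p by case: (extreme_or_phull_filter pT).
set T' := [seq x <- T | x != p] in hp *.
have eqh : phull T' = phull T := phull_filter_eq hp.
have sub_vert : {subset vertices T' <= vertices T}.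
  by move=> x; rewrite !mem_vertices eqh mem_filter => /andP[/andP[_ ->] ->].
have sT' : (size T' <= n)%N by rewrite -ltnS (leq_trans (size_filter_neq pT)).
apply: (phull_subset sub_vert); apply: (phull_min (@phull_convex _) (fun x => IH T' sT' x)).
have [->//|zp] := eqVneq z p.
by apply: phull_mem; rewrite mem_filter zp.
Qed.

Lemma phull_vertices (T : seq point) : phull (vertices T) = phull T.
Proof.
rewrite eqEsubset; split; first exact: phull_subset (@vertices_sub T).
exact: phull_min (@phull_convex _) (@phull_vertices_mem T).
Qed.

Lemma vertices_polygon (T : seq point) : polygon_vertices (vertices T).
Proof.
split=> [|z]; first exact: undup_uniq.
by rewrite phull_vertices mem_vertices => /andP[_ /asboolP].
Qed.

(** * Points on a line *)

Definition sqdist (p q : point) : R := (q.1 - p.1) ^+ 2 + (q.2 - p.2) ^+ 2.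

Lemma sqdist_gt0 (p q : point) : p <> q -> 0 < sqdist p q.
Proof.
move=> pq; rewrite lt_neqAle addr_ge0 ?sqr_ge0 // andbT eq_sym paddr_eq0 ?sqr_ge0 //.
rewrite !sqrf_eq0 !subr_eq0; apply/negP => /andP[/eqP e1 /eqP e2].
exact/pq/pt_ext.
Qed.

Definition line_coord (p q z : point) : R :=
  ((q.1 - p.1) * (z.1 - p.1) + (q.2 - p.2) * (z.2 - p.2)) / sqdist p q.

Lemma on_line_coord (p q z : point) : p <> q -> orient p q z = 0 ->
  z = ray p q (line_coord p q z).
Proof.
move=> pq o; set d := sqdist p q; have d0 : d != 0 by rewrite gt_eqF ?sqdist_gt0.
set N := (q.1 - p.1) * (z.1 - p.1) + (q.2 - p.2) * (z.2 - p.2).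
have k1 : d * (z.1 - p.1) - N * (q.1 - p.1) = - (q.2 - p.2) * orient p q z.
  by rewrite /d /sqdist /N /orient; ring.
have k2 : d * (z.2 - p.2) - N * (q.2 - p.2) = (q.1 - p.1) * orient p q z.
  by rewrite /d /sqdist /N /orient; ring.
rewrite o mulr0 in k1 k2.
apply: pt_ext; rewrite /ray /line_coord -/N -/d /=; apply/eqP; rewrite -subr_eq0; apply/eqP.
  by transitivity ((d * (z.1 - p.1) - N * (q.1 - p.1)) / d); [field | rewrite k1; field].
by transitivity ((d * (z.2 - p.2) - N * (q.2 - p.2)) / d); [field | rewrite k2; field].
Qed.

Lemma line_coord_inj (p q a b : point) : p <> q -> orient p q a = 0 -> orient p q b = 0 ->
  line_coord p q a = line_coord p q b -> a = b.
Proof.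
by move=> pq oa ob e; rewrite (on_line_coord pq oa) (on_line_coord pq ob) e.
Qed.

Lemma line_coord_between (p q a b c : point) : p <> q ->
  orient p q a = 0 -> orient p q b = 0 -> orient p q c = 0 ->
  line_coord p q a < line_coord p q b < line_coord p q c ->
  exists2 t, 0 < t < 1 & b = pcomb t a c.
Proof.
move=> pq /(on_line_coord pq) ea /(on_line_coord pq) eb /(on_line_coord pq) ec.
set la := line_coord p q a in ea *; set lb := line_coord p q b in eb *.
set lc := line_coord p q c in ec * => /andP[h1 h2].
have d0 : lc - la != 0 by rewrite subr_eq0 gt_eqF // (lt_trans h1 h2).
exists ((lc - lb) / (lc - la)).
  apply/andP; split; first by rewrite divr_gt0 // subr_gt0 // (lt_trans h1).
  by rewrite ltr_pdivrMr ?subr_gt0 ?(lt_trans h1) // mul1r; lra.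
by rewrite eb; apply: pt_ext; rewrite ea ec /=; field.
Qed.

Lemma extreme_on_line_no3 (X : set point) (p q a b c : point) : p <> q ->
  orient p q a = 0 -> orient p q b = 0 -> orient p q c = 0 -> a <> b -> b <> c -> a <> c ->
  extreme_pt X a -> extreme_pt X b -> extreme_pt X c -> False.
Proof.
move=> pq; set l := line_coord p q.
have middle x y z : orient p q x = 0 -> orient p q y = 0 -> orient p q z = 0 -> x <> z ->
    extreme_pt X x -> extreme_pt X y -> extreme_pt X z -> l x < l y < l z -> False.
  move=> ox oy oz xz [Xx _] [_ ey] [Xz _] /(line_coord_between pq ox oy oz)[t t01 e].
  exact/xz/(ey x z t).
have l_neq x y : orient p q x = 0 -> orient p q y = 0 -> x <> y -> l x != l y.
  by move=> ox oy xy; apply/eqP => /(line_coord_inj pq ox oy).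
wlog lab : a b c / l a < l b.
  move=> W oa ob oc ab bc ac ea eb ec.
  case: (ltgtP (l a) (l b)) => [h|h|/eqP]; first exact: (W a b c).
    by apply: (W b a c) => // /esym.
  by rewrite (negbTE (l_neq _ _ oa ob ab)).
move=> oa ob oc ab bc ac ea eb ec.
case: (ltgtP (l b) (l c)) => [hbc|hcb|/eqP]; first by apply: (middle a b c); rewrite ?lab.
  case: (ltgtP (l a) (l c)) => [hac|hca|/eqP]; first by apply: (middle a c b); rewrite ?hac.
    by apply: (middle c a b) => // [/esym|]; rewrite ?hca.
  by rewrite (negbTE (l_neq _ _ oa oc ac)).
by rewrite (negbTE (l_neq _ _ ob oc bc)).
Qed.

Lemma size_extreme_on_line (X : set point) (p q : point) (s : seq point) : p <> q ->
  uniq s -> (forall w, w \in s -> extreme_pt X w /\ orient p q w = 0) -> (size s <= 2)%N.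
Proof.
move=> pq; case: s => [|a [|b [|c s]]] //= /andP[]; rewrite !inE !negb_or.
move=> /and3P[ab ac _] /andP[/andP[bc _] _] hs.
have [ea oa] := hs a (mem_head _ _).
have [eb ob] : extreme_pt X b /\ orient p q b = 0 by apply: hs; rewrite !inE eqxx orbT.
have [ec oc] : extreme_pt X c /\ orient p q c = 0 by apply: hs; rewrite !inE eqxx !orbT.
by case: (extreme_on_line_no3 pq oa ob oc (elimN eqP ab) (elimN eqP bc) (elimN eqP ac) ea eb ec).
Qed.

(** * Tangents and neighbouring vertices *)

Definition noncollinear (T : seq point) :=
  forall p q : point, p <> q -> exists2 z, z \in T & orient p q z != 0.

Lemma noncollinear_exists_neq (T : seq point) s : noncollinear T -> exists2 z, z \in T & z != s.
Proof.
move=> nc; have sq : s <> (s.1 + 1, s.2).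
  by move/(congr1 fst)/eqP; rewrite eq_sym -subr_eq0 addrAC subrr add0r oner_eq0.
have [z zT oz] := nc _ _ sq; exists z => //.
by apply: contraNneq oz => ->; rewrite orient_pp.
Qed.

Lemma noncollinear_neq_nil (T : seq point) : noncollinear T -> T != [::].
Proof.
by move=> nc; have [z zT _] := noncollinear_exists_neq (0, 0) nc; apply: contraTneq zT => ->.
Qed.

Lemma noncollinear_phull (S T : seq point) :
  noncollinear S -> (forall z, z \in S -> phull T z) -> noncollinear T.
Proof.
move=> nc ST p q pq; have [z zS oz] := nc p q pq; apply: contrapT => noT.
have onT w : w \in T -> orient p q w = 0.
  by move=> wT; apply/eqP; apply: contrapT => /negP ow; apply: noT; exists w.
have := phull_min (affine_pconvex_eq (c := 0) (orient_affine p q)) onT (ST z zS).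
by move=> /= /eqP; rewrite (negbTE oz).
Qed.

Lemma orient_split (a b c s : point) :
  orient a b c = orient s b c + orient s c a + orient s a b.
Proof. by rewrite /orient; ring. Qed.

Lemma pconvex_comb3 (X : set point) (x y z s : point) (al be ga : R) :
  pconvex X -> X x -> X y -> X z -> 0 <= al -> 0 <= be -> 0 <= ga -> al + be + ga = 1 ->
  s.1 = al * x.1 + be * y.1 + ga * z.1 -> s.2 = al * x.2 + be * y.2 + ga * z.2 -> X s.
Proof.
move=> cX Xx Xy Xz a0 b0 g0 sum e1 e2; have [g1|g1] := eqVneq ga 1.
  have [a00 b00] : al = 0 /\ be = 0 by split; lra.
  suff -> : s = z by [].
  by apply: pt_ext; rewrite ?e1 ?e2 a00 b00 g1; ring.
have k : 1 - ga != 0 by rewrite subr_eq0 eq_sym.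
have -> : s = pcomb (1 - ga) (pcomb (al / (1 - ga)) x y) z.
  by apply: pt_ext; rewrite /= ?e1 ?e2 (_ : be = 1 - ga - al); first [field | lra].
apply: (cX) => //; last by apply/andP; split; lra.
apply: cX => //; apply/andP; split; first by apply: divr_ge0; lra.
by rewrite ler_pdivrMr ?mul1r; lra.
Qed.

(* The weights are the barycentric coordinates of [s] in the triangle [a b c]. *)
Lemma pconvex_triangle (X : set point) (sg : R) (a b c s : point) :
  pconvex X -> X a -> X b -> X c ->
  0 <= sg * orient s b c -> 0 <= sg * orient s c a -> 0 <= sg * orient s a b ->
  0 < sg * orient a b c -> X s.
Proof.
move=> cX Xa Xb Xc ha hb hc hD.
have : sg * orient a b c != 0 by rewrite gt_eqF.
rewrite mulf_eq0 negb_or => /andP[sg0 o0].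
apply: (pconvex_comb3 cX Xa Xb Xc (al := sg * orient s b c / (sg * orient a b c))
  (be := sg * orient s c a / (sg * orient a b c)) (ga := sg * orient s a b / (sg * orient a b c))).
- by rewrite divr_ge0 // ltW.
- by rewrite divr_ge0 // ltW.
- by rewrite divr_ge0 // ltW.
- by rewrite -!mulrDl -!mulrDr -orient_split mulfV // gt_eqF.
- by rewrite /orient in o0 *; field; rewrite ?sg0 ?o0.
- by rewrite /orient in o0 *; field; rewrite ?sg0 ?o0.
Qed.

Lemma ray_neg_between (s a : point) l : l < 0 ->
  exists2 t, 0 < t < 1 & s = pcomb t a (ray s a l).
Proof.
move=> l0; have k : 1 - l != 0 by rewrite gt_eqF // subr_gt0 (lt_trans l0 ltr01).
exists (- l / (1 - l)); last by apply: pt_ext; rewrite /ray /=; field.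
by apply/andP; split; [rewrite divr_gt0 //; lra | rewrite ltr_pdivrMr; lra].
Qed.

(* [a] is a point of tangency from [s] to [conv D]; [sg = 1] and [sg = -1] give
   the two tangents. *)
Definition tangent_from (sg : R) (s : point) (D : seq point) (a : point) :=
  forall z, z \in D -> 0 <= sg * orient s a z /\
    (orient s a z = 0 -> exists2 mu, 1 <= mu & z = ray s a mu).

Lemma tangent_from1 (sg : R) (s a : point) : tangent_from sg s [:: a] a.
Proof.
move=> z; rewrite inE => /eqP ->; rewrite orient_qq mulr0; split=> // _.
by exists 1; rewrite ?ray1.
Qed.

Lemma tangent_from_cons (sg : R) (s w a : point) D :
  tangent_from sg s [:: w] a -> tangent_from sg s D a -> tangent_from sg s (w :: D) a.
Proof. by move=> hw hD z; rewrite inE => /orP[/eqP ->|/hD //]; apply: hw; rewrite mem_head. Qed.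

Lemma tangent_from_ray (sg : R) (s a : point) l D :
  0 < l <= 1 -> tangent_from sg s D a -> tangent_from sg s D (ray s a l).
Proof.
move=> /andP[l0 l1] ha z zD; have [hz hz0] := ha z zD.
rewrite orient_ray; split; first by rewrite mulrCA mulr_ge0 // ltW.
move=> /eqP; rewrite mulf_eq0 gt_eqF //= => /eqP/hz0[mu mu1 ->].
exists (mu / l); first by rewrite ler_pdivlMr // mul1r (le_trans l1).
by rewrite ray_ray mulrCA mulfV ?gt_eqF // mulr1.
Qed.

Lemma tangent_from_turn (sg : R) (s w a : point) D : ~ phull (w :: D) s -> a \in D ->
  tangent_from sg s D a -> sg * orient s a w < 0 -> tangent_from sg s D w.
Proof.
move=> hs aD ha neg z zD.
have inD x : x \in D -> phull (w :: D) x by move=> xD; apply: phull_mem; rewrite inE xD orbT.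
suff wz : 0 < sg * orient s w z.
  by split=> [|e]; [exact: ltW | move: wz; rewrite e mulr0 ltxx].
rewrite ltNge; apply/negP => hz; apply: hs.
have h1 : 0 <= sg * orient s z w by rewrite orient_swapr mulrN oppr_ge0.
have h2 : 0 < sg * orient s w a by rewrite orient_swapr mulrN oppr_gt0.
have h3 := (ha z zD).1.
have inw : phull (w :: D) w by apply: phull_mem; rewrite mem_head.
apply: (pconvex_triangle (@phull_convex _) (inD a aD) (inD z zD) inw h1 (ltW h2) h3).
have e : sg * orient a z w = sg * orient s z w + sg * orient s w a + sg * orient s a z.
  by rewrite (orient_split a z w s); ring.
by rewrite e; lra.
Qed.

Lemma exists_tangent_cons (sg : R) (s w a : point) D : sg != 0 -> ~ phull (w :: D) s ->
  a \in D -> tangent_from sg s D a -> exists2 a', a' \in w :: D & tangent_from sg s (w :: D) a'.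
Proof.
move=> sg0 hs aD ha; have aD' : a \in w :: D by rewrite inE aD orbT.
have sa : s <> a by move=> e; apply: hs; rewrite e; apply: phull_mem.
have [pos|npos] := ltP 0 (sg * orient s a w).
  exists a => //; apply: tangent_from_cons => // _ /[!inE] /eqP ->.
  by split=> [|e]; [exact: ltW | move: pos; rewrite e mulr0 ltxx].
have [ow|ow] := eqVneq (orient s a w) 0; last first.
  have neg : sg * orient s a w < 0 by rewrite lt_neqAle npos andbT mulf_neq0.
  exists w; first exact: mem_head.
  apply: tangent_from_cons; first exact: tangent_from1.
  exact: tangent_from_turn hs aD ha neg.
have ew := on_line_coord sa ow; set l := line_coord s a w in ew.
have [l1|l1] := leP 1 l.
  exists a => //; apply: tangent_from_cons => // _ /[!inE] /eqP ->.
  by rewrite ow mulr0; split=> // _; exists l.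
have inw : phull (w :: D) w by apply: phull_mem; rewrite mem_head.
have [lneg|lpos|l0] := ltgtP l 0.
- have [t /andP[t0 t1] es] := ray_neg_between s a lneg; case: hs; rewrite es -ew.
  by apply: phull_convex => //; [exact: phull_mem | rewrite !ltW].
- exists w; first exact: mem_head.
  apply: tangent_from_cons; first exact: tangent_from1.
  by rewrite ew; apply: tangent_from_ray => //; rewrite lpos ltW.
- by case: hs; rewrite (_ : s = w) // ew l0 ray0.
Qed.

Lemma exists_tangent (sg : R) (s : point) D : sg != 0 -> D != [::] -> ~ phull D s ->
  exists2 a, a \in D & tangent_from sg s D a.
Proof.
move=> sg0; elim: D => [//|w D IH] _ hs; have [->|Dn] := eqVneq D [::].
  by exists w; [exact: mem_head | exact: tangent_from1].
have sub : {subset D <= w :: D} by move=> x xD; rewrite inE xD orbT.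
have [a aD ha] := IH Dn (fun h => hs (phull_subset sub h)).
exact: exists_tangent_cons sg0 hs aD ha.
Qed.

Lemma extreme_notin_phull_filter (T : seq point) s :
  extreme_pt (phull T) s -> ~ phull [seq x <- T | x != s] s.
Proof.
move=> ext hs; move: ext; rewrite -(phull_filter_eq hs) => /mem_extreme_phull.
by rewrite mem_filter eqxx.
Qed.

Lemma vertex_neighbours (T : seq point) s : s \in T -> extreme_pt (phull T) s ->
  noncollinear T -> exists sp sm, [/\ sp \in T, sm \in T, sp <> s, sm <> s &
   [/\ forall z, z \in T -> 0 <= orient s sp z,
       forall z, z \in T -> 0 <= orient sm s z & 0 < orient s sp sm]].
Proof.
move=> sT ext nc; set D := [seq x <- T | x != s].
have memD z : z \in T -> z != s -> z \in D by move=> zT zs; rewrite mem_filter zs.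
have Dn : D != [::].
  have [z zT zs] := noncollinear_exists_neq s nc.
  by apply/eqP => D0; move: (memD z zT zs); rewrite D0.
have hs := extreme_notin_phull_filter ext.
have m1 : (-1 : R) != 0 by rewrite oppr_eq0 oner_eq0.
have [sp spD hp] := exists_tangent (oner_neq0 R) Dn hs.
have [sm smD hm] := exists_tangent m1 Dn hs.
move: (spD) (smD); rewrite !mem_filter => /andP[sps spT] /andP[sms smT].
have hp' z : z \in T -> 0 <= orient s sp z.
  move=> zT; have [->|zs] := eqVneq z s; first by rewrite orient_pp.
  by have [+ _] := hp z (memD z zT zs); rewrite mul1r.
have hm' z : z \in T -> 0 <= orient sm s z.
  move=> zT; have [->|zs] := eqVneq z s; first by rewrite orient_qq.
  by have [+ _] := hm z (memD z zT zs); rewrite [orient sm s z]orient_swapl mulN1r.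
exists sp, sm; split; [done | done | exact/eqP | exact/eqP | split => //].
rewrite lt_neqAle hp' // andbT; apply/negP => /eqP/esym o0.
have [mu mu1 esm] := (hp sm smD).2 o0.
have [z zT] := nc s sp (fun e => elimN eqP sps (esym e)); apply/negP; rewrite negbK.
have [->|zs] := eqVneq z s; first by rewrite orient_pp.
have := (hm z (memD z zT zs)).1; rewrite esm orient_ray => h1; have h2 := hp' z zT.
by rewrite eq_le h2 andbT; nra.
Qed.

Lemma supporting_rays_eq (T : seq point) (s p q : point) : extreme_pt (phull T) s ->
  p \in T -> q \in T -> p <> s -> q <> s ->
  (forall z, z \in T -> 0 <= orient s p z) -> (forall z, z \in T -> 0 <= orient s q z) ->
  exists2 mu, 0 < mu & forall z, orient s q z = mu * orient s p z.
Proof.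
move=> ext pT qT ps qs hp hq.
have o : orient s p q = 0.
  have := hq p pT; rewrite orient_swapr => h2.
  by apply/eqP; rewrite eq_le (hp q qT) andbT; lra.
have sp : s <> p by move=> e; apply: ps.
have eq_q := on_line_coord sp o; set l := line_coord s p q in eq_q.
have [lneg|lpos|l0] := ltgtP l 0.
- have [t t01 es] := ray_neg_between s p lneg; rewrite -eq_q in es.
  have pq : p <> q by move=> e; apply: ps; rewrite es -e pcombxx.
  by case: pq; apply: (ext.2 p q t) => //; apply: phull_mem.
- by exists l => // z; rewrite [in LHS]eq_q orient_ray.
- by case: qs; rewrite eq_q l0 ray0.
Qed.

Definition wedge_pt (s p q : point) (al be : R) : point :=
  (s.1 + al * (p.1 - s.1) + be * (q.1 - s.1), s.2 + al * (p.2 - s.2) + be * (q.2 - s.2)).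

Lemma orient_wedge_pt (a b s p q : point) al be : orient a b (wedge_pt s p q al be) =
  orient a b s + al * (orient a b p - orient a b s) + be * (orient a b q - orient a b s).
Proof. by rewrite /orient /wedge_pt /=; ring. Qed.

Lemma wedge_decomp (s p q z : point) : 0 < orient s p q ->
  0 <= orient s p z -> 0 <= orient q s z ->
  exists al be, [/\ 0 <= al, 0 <= be & z = wedge_pt s p q al be].
Proof.
move=> c0 h1 h2; have k : orient s p q != 0 by rewrite gt_eqF.
exists (orient q s z / orient s p q), (orient s p z / orient s p q).
split; [by rewrite divr_ge0 // ltW | by rewrite divr_ge0 // ltW |].
by move: k; rewrite /orient => k; apply: pt_ext; rewrite /wedge_pt /=; field.
Qed.

(** * Polygons cut out by half-planes *)

Lemma pt_neq_dir (a b : point) : a <> b -> (b.1 - a.1 != 0) || (b.2 - a.2 != 0).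
Proof.
move=> ab; rewrite !subr_eq0 -negb_and; apply/negP => /andP[/eqP e1 /eqP e2].
exact/ab/pt_ext.
Qed.

Definition side (j : point * point) (z : point) : R := orient j.1 j.2 z.

Definition polyhedron (J : seq (point * point)) : set point :=
  [set z | forall j, j \in J -> 0 <= side j z].

Definition side_dir (j : point * point) (d : point) : R :=
  (j.2.1 - j.1.1) * d.2 - (j.2.2 - j.1.2) * d.1.

Definition translate (z d : point) (e : R) : point := (z.1 + e * d.1, z.2 + e * d.2).

Definition opp_dir (d : point) : point := (- d.1, - d.2).

Lemma side_translate j (z d : point) e : side j (translate z d e) = side j z + e * side_dir j d.
Proof. by rewrite /side /orient /side_dir /translate /=; ring. Qed.

Lemma side_dir_opp j (d : point) : side_dir j (opp_dir d) = - side_dir j d.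
Proof. by rewrite /side_dir /=; ring. Qed.

Lemma opp_dir_neq0 (d : point) :
  (d.1 != 0) || (d.2 != 0) -> ((opp_dir d).1 != 0) || ((opp_dir d).2 != 0).
Proof. by rewrite /opp_dir /= !oppr_eq0. Qed.

Lemma translate_opp (z d : point) e : translate z (opp_dir d) e = translate z d (- e).
Proof. by apply: pt_ext; rewrite /translate /=; ring. Qed.

Lemma polyhedron_convex J : pconvex (polyhedron J).
Proof.
move=> a b t ha hb t01 j jJ.
exact: (affine_pconvex_ge (orient_affine j.1 j.2)) (ha j jJ) (hb j jJ) t01.
Qed.

Lemma polyhedron_small_translate J (z d : point) : polyhedron J z ->
  (forall j, j \in J -> side j z = 0 -> 0 <= side_dir j d) ->
  exists2 e, 0 < e & forall e', 0 <= e' <= e -> polyhedron J (translate z d e').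
Proof.
elim: J => [|j J IH] Kz hd; first by exists 1 => // e' _ j.
have [e0 e00 he0] : exists2 e, 0 < e & forall e', 0 <= e' <= e -> polyhedron J (translate z d e').
  by apply: IH => [i iJ|i iJ]; [apply: Kz | apply: hd]; rewrite inE iJ orbT.
have gz := Kz j (mem_head _ _).
have [g0|gp] := eqVneq (side j z) 0.
  exists e0 => // e' he' i; rewrite inE => /orP[/eqP ->|iJ]; last exact: he0.
  rewrite side_translate g0 add0r mulr_ge0 //; last exact: hd (mem_head _ _) g0.
  by case/andP: he'.
have gpos : 0 < side j z by rewrite lt_neqAle eq_sym gp gz.
set c := side_dir j d; have c1 : 0 < `|c| + 1 by rewrite ltr_wpDl.
exists (Num.min e0 (side j z / (`|c| + 1))); first by rewrite lt_min e00 divr_gt0.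
move=> e' /andP[h0 h1] i; rewrite inE => /orP[/eqP ->|iJ]; last first.
  by apply: he0 => //; rewrite h0 (le_trans h1) // ge_min lexx.
have h2 : e' * (`|c| + 1) <= side j z.
  by rewrite -ler_pdivlMr // (le_trans h1) // ge_min lexx orbT.
have h3 : - `|c| <= c by rewrite lerNl ler_normr lexx orbT.
by rewrite side_translate -/c; clear -h0 h2 h3 gpos c1; nra.
Qed.

Lemma not_extreme_free_dir J (z d : point) : polyhedron J z -> (d.1 != 0) || (d.2 != 0) ->
  (forall j, j \in J -> side j z = 0 -> side_dir j d = 0) -> ~ extreme_pt (polyhedron J) z.
Proof.
move=> Kz dn hd [_ ext].
have [e1 e10 h1] : exists2 e, 0 < e & forall e', 0 <= e' <= e -> polyhedron J (translate z d e').
  by apply: polyhedron_small_translate => // j jJ /(hd j jJ) ->.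
have [e2 e20 h2] : exists2 e, 0 < e &
    forall e', 0 <= e' <= e -> polyhedron J (translate z (opp_dir d) e').
  apply: polyhedron_small_translate => // j jJ /(hd j jJ).
  by rewrite side_dir_opp => ->; rewrite oppr0.
set e := Num.min e1 e2; have e0 : 0 < e by rewrite lt_min e10 e20.
have Ka : polyhedron J (translate z d e) by apply: h1; rewrite ltW //= ge_min lexx.
have Kb : polyhedron J (translate z d (- e)).
  by rewrite -translate_opp; apply: h2; rewrite ltW //= ge_min lexx orbT.
have ab : translate z d e <> translate z d (- e).
  move=> h; move: dn; have := congr1 fst h; have := congr1 snd h; rewrite /translate /= => k2 k1.
  have -> : d.1 = 0 by nra.
  have -> : d.2 = 0 by nra.
  by rewrite eqxx.
apply: ab; apply: (ext _ _ (1 / 2)) => //; first by rewrite divr_gt0 //= ltr_pdivrMr //; lra.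
by apply: pt_ext; rewrite /translate /=; field.
Qed.

Definition dir (j : point * point) : point := (j.2.1 - j.1.1, j.2.2 - j.1.2).

Lemma side_dir_dir j : side_dir j (dir j) = 0.
Proof. by rewrite /side_dir /dir /=; ring. Qed.

Lemma extreme_two_tight J z : (forall j, j \in J -> j.1 <> j.2) ->
  extreme_pt (polyhedron J) z -> exists j1 j2,
    [/\ j1 \in J, j2 \in J, side j1 z = 0, side j2 z = 0 & side_dir j2 (dir j1) != 0].
Proof.
move=> hJ ext; have Kz := ext.1.
have tight_moving (d : point) : (d.1 != 0) || (d.2 != 0) ->
    exists j, [/\ j \in J, side j z = 0 & side_dir j d != 0].
  move=> dn; apply: contrapT => H; apply: (not_extreme_free_dir Kz dn) => // j jJ gz.
  by apply/eqP; apply: contrapT => /negP cn; apply: H; exists j.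
have := tight_moving (1, 0); rewrite /= oner_eq0 => /(_ isT) [j1 [j1J g1 _]].
have [j2 [j2J g2 c2]] := tight_moving (dir j1) (pt_neq_dir (hJ j1 j1J)).
by exists j1, j2.
Qed.

(* Cramer's rule for the intersection of the lines of [j1] and [j2]. *)
Definition meet_pt (j1 j2 : point * point) : point :=
  let a := j1.1 in let d1 := dir j1 in let b := j2.1 in let d2 := dir j2 in
  let D := d1.1 * d2.2 - d1.2 * d2.1 in
  let c1 := d1.1 * a.2 - d1.2 * a.1 in let c2 := d2.1 * b.2 - d2.2 * b.1 in
  ((c1 * d2.1 - c2 * d1.1) / D, (c1 * d2.2 - c2 * d1.2) / D).

Lemma tight_meet_pt j1 j2 z : side j1 z = 0 -> side j2 z = 0 -> side_dir j2 (dir j1) != 0 ->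
  z = meet_pt j1 j2.
Proof.
rewrite /side /orient /side_dir /meet_pt /dir /= => h1 h2 hc.
have D0 : (j1.2.1 - j1.1.1) * (j2.2.2 - j2.1.2) - (j1.2.2 - j1.1.2) * (j2.2.1 - j2.1.1) != 0.
  by apply: contra hc => /eqP h; apply/eqP; lra.
apply: pt_ext => /=; rewrite -[LHS](mulfK D0); congr (_ / _).
  have := congr1 (fun x => x * (j2.2.1 - j2.1.1)) h1.
  have := congr1 (fun x => x * (j1.2.1 - j1.1.1)) h2.
  by rewrite /= !mul0r => k2 k1; nra.
have := congr1 (fun x => x * (j2.2.2 - j2.1.2)) h1.
have := congr1 (fun x => x * (j1.2.2 - j1.1.2)) h2.
by rewrite /= !mul0r => k2 k1; nra.
Qed.

Definition poly_vertices (J : seq (point * point)) : seq point :=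
  undup [seq z <- [seq meet_pt j1 j2 | j1 <- J, j2 <- J] | `[< extreme_pt (polyhedron J) z >]].

Lemma poly_vertices_extreme J z : z \in poly_vertices J -> extreme_pt (polyhedron J) z.
Proof. by rewrite mem_undup mem_filter => /andP[/asboolP]. Qed.

Lemma extreme_mem_poly_vertices J z : (forall j, j \in J -> j.1 <> j.2) ->
  extreme_pt (polyhedron J) z -> z \in poly_vertices J.
Proof.
move=> hJ ext; rewrite mem_undup mem_filter; apply/andP; split; first exact/asboolP.
have [j1 [j2 [j1J j2J g1 g2 c]]] := extreme_two_tight hJ ext.
by rewrite (tight_meet_pt g1 g2 c); apply: allpairs_f.
Qed.

Definition bounded (X : set point) := exists B, forall z, X z -> `|z.1| <= B /\ `|z.2| <= B.

Lemma exists_far (x dx B : R) : dx != 0 -> `|x| <= B -> exists2 l, 0 <= l & B < `|x + l * dx|.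
Proof.
move=> d0; rewrite ler_norml => /andP[h1 h2]; have [dp|dn] := ltP 0 dx.
  exists ((B - x + 1) / dx); first by apply: divr_ge0; lra.
  by rewrite mulfVK ?gt_eqF // (_ : x + _ = B + 1) ?ger0_norm; lra.
have dn' : dx < 0 by rewrite lt_neqAle d0 dn.
exists ((x + B + 1) / - dx); first by apply: divr_ge0; lra.
rewrite (_ : x + _ = - (B + 1)); last by field; rewrite ?oppr_eq0.
by rewrite normrN ger0_norm; lra.
Qed.

Lemma bounded_blocking J (z d : point) : bounded (polyhedron J) -> polyhedron J z ->
  (d.1 != 0) || (d.2 != 0) -> exists2 j, j \in J & side_dir j d < 0.
Proof.
move=> [B hB] Kz dn; apply: contrapT => noblock.
have Kl l : 0 <= l -> polyhedron J (translate z d l).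
  move=> l0 j jJ; rewrite side_translate addr_ge0 ?(Kz j jJ) // mulr_ge0 // leNgt.
  by apply/negP => cn; apply: noblock; exists j.
have [bz1 bz2] := hB z Kz; case/orP: dn => dn.
  have [l l0 hl] := exists_far dn bz1.
  by have [+ _] := hB _ (Kl l l0); rewrite /translate /= leNgt hl.
have [l l0 hl] := exists_far dn bz2.
by have [_ +] := hB _ (Kl l l0); rewrite /translate /= leNgt hl.
Qed.

Definition slack J (z : point) := count (fun j => 0 < side j z) J.

Lemma translate_to_tight J (z d : point) : bounded (polyhedron J) -> polyhedron J z ->
  (d.1 != 0) || (d.2 != 0) -> (forall j, j \in J -> side j z = 0 -> side_dir j d = 0) ->
  exists2 l, 0 < l & polyhedron J (translate z d l) /\ (slack J (translate z d l) < slack J z)%N.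
Proof.
move=> bJ Kz dn hd; set N := [seq j <- J | side_dir j d < 0].
have Nn : N != [::].
  have [j jJ jd] := bounded_blocking bJ Kz dn.
  have jN : j \in N by rewrite mem_filter jd jJ.
  by apply/eqP => N0; rewrite N0 in jN.
pose f j := side j z / - side_dir j d.
have [js jsN jmin] := seq_argmin f Nn; move: (jsN); rewrite mem_filter => /andP[cs jsJ].
have gs : 0 < side js z.
  rewrite lt_neqAle Kz // andbT; apply/negP => /eqP/esym g0.
  by move: cs; rewrite (hd js jsJ g0) ltxx.
have cs0 : 0 < - side_dir js d by rewrite oppr_gt0.
exists (f js); first by rewrite divr_gt0.
have Ksh : polyhedron J (translate z d (f js)).
  move=> j jJ; rewrite side_translate; have [cn|cp] := ltP (side_dir j d) 0.
    have := jmin j; rewrite mem_filter cn jJ {2}/f => /(_ isT).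
    by rewrite ler_pdivlMr ?oppr_gt0 // => h; lra.
  by rewrite addr_ge0 ?(Kz j jJ) // mulr_ge0 // ltW // divr_gt0.
split => //; apply: sub_in_count_lt.
  move=> j jJ /=; rewrite side_translate => h.
  rewrite lt_neqAle Kz // andbT; apply/negP => /eqP/esym g0.
  by move: h; rewrite g0 (hd j jJ g0) mulr0 addr0 ltxx.
exists js => //; rewrite gs /= side_translate /f -leNgt.
by rewrite (_ : _ + _ = 0) //; field; rewrite lt_eqF.
Qed.

Lemma nonextreme_free_dir J z : polyhedron J z -> ~ extreme_pt (polyhedron J) z ->
  exists2 d : point, (d.1 != 0) || (d.2 != 0) &
    forall j, j \in J -> side j z = 0 -> side_dir j d = 0.
Proof.
move=> Kz next; have [a [b [t [Ka Kb /andP[t0 t1] e ab]]]] : exists a b t,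
    [/\ polyhedron J a, polyhedron J b, 0 < t < 1, z = pcomb t a b & a <> b].
  apply: contrapT => H; apply: next; split => // a b t ha hb ht e.
  by apply: contrapT => ab; apply: H; exists a, b, t.
exists (b.1 - a.1, b.2 - a.2); first exact: pt_neq_dir.
move=> j jJ; rewrite e /side orient_affine => h.
have := Ka j jJ; have := Kb j jJ; rewrite /side => hb ha.
have ga : orient j.1 j.2 a = 0 by nra.
have gb : orient j.1 j.2 b = 0 by nra.
have -> : side_dir j (b.1 - a.1, b.2 - a.2) = orient j.1 j.2 b - orient j.1 j.2 a.
  by rewrite /side_dir /orient /=; ring.
by rewrite ga gb subrr.
Qed.

(* Finite Krein-Milman for polygons: a non-extreme point is a proper convex
   combination of two points with fewer slack constraints. *)
Lemma polyhedron_sub_phull J : (forall j, j \in J -> j.1 <> j.2) -> bounded (polyhedron J) ->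
  polyhedron J `<=` phull (poly_vertices J).
Proof.
move=> hJ bJ; suff H n z : (slack J z < n)%N -> polyhedron J z -> phull (poly_vertices J) z.
  by move=> z Kz; apply: (H (slack J z).+1).
elim: n z => [//|n IH] z hn Kz.
case: (pselect (extreme_pt (polyhedron J) z)) => [ext|next].
  by apply: phull_mem; apply: extreme_mem_poly_vertices.
have [d dn hd] := nonextreme_free_dir Kz next.
have hd' j : j \in J -> side j z = 0 -> side_dir j (opp_dir d) = 0.
  by move=> jJ /(hd j jJ); rewrite side_dir_opp => ->; rewrite oppr0.
have [l1 l10 [K1 c1]] := translate_to_tight bJ Kz dn hd.
have [l2 l20 [K2 c2]] := translate_to_tight bJ Kz (opp_dir_neq0 dn) hd'.
have l12 : 0 < l1 + l2 by rewrite addr_gt0.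
have -> : z = pcomb (l2 / (l1 + l2)) (translate z d l1) (translate z (opp_dir d) l2).
  by apply: pt_ext; rewrite /translate /opp_dir /=; field; rewrite gt_eqF.
apply: phull_convex; [exact: IH (leq_trans c1 hn) K1 | exact: IH (leq_trans c2 hn) K2 |].
apply/andP; split; first by rewrite divr_ge0 // ltW.
by rewrite ler_pdivrMr // mul1r lerDr ltW.
Qed.

Lemma size_poly_vertices J : (forall j, j \in J -> j.1 <> j.2) ->
  (size (poly_vertices J) <= size J)%N.
Proof.
move=> hJ; pose r v j := side j v == 0.
have two_tight v : v \in poly_vertices J -> (2 <= count (r v) J)%N.
  move=> /poly_vertices_extreme ext.
  have [j1 [j2 [j1J j2J g1 g2 c]]] := extreme_two_tight hJ ext.
  apply: (@count_ge2 _ _ _ j1 j2) => //; try exact/eqP.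
  by apply/eqP => e; move: c; rewrite -e side_dir_dir eqxx.
have two_on_line j : j \in J -> (count (r^~ j) (poly_vertices J) <= 2)%N.
  move=> jJ; rewrite -size_filter; apply: (size_extreme_on_line (X := polyhedron J) (hJ j jJ)).
    by apply: filter_uniq; apply: undup_uniq.
  by move=> v; rewrite mem_filter => /andP[/eqP e /poly_vertices_extreme ext].
by rewrite -(@leq_pmul2l 2) // (double_count two_tight two_on_line).
Qed.

Lemma phull_poly_vertices J : (forall j, j \in J -> j.1 <> j.2) -> bounded (polyhedron J) ->
  phull (poly_vertices J) = polyhedron J.
Proof.
move=> hJ bJ; rewrite eqEsubset; split; last exact: polyhedron_sub_phull.
by apply: phull_min (@polyhedron_convex J) _ => z /poly_vertices_extreme[].
Qed.

Lemma poly_edge_tight J (a b : point) : poly_edge (polyhedron J) a b ->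
  exists2 j, j \in J & side j a = 0 /\ side j b = 0.
Proof.
move=> [_ [[Ka _] [[Kb _] [u [c [u0 [ua [ub hu]]]]]]]].
set m := pcomb (1 / 2) a b.
have Km : polyhedron J m by apply: polyhedron_convex => //; apply/andP; split; lra.
have [j jJ gm] : exists2 j, j \in J & side j m = 0.
  apply: contrapT => notight.
  have [e e0 he] : exists2 e, 0 < e & forall e', 0 <= e' <= e -> polyhedron J (translate m u e').
    by apply: polyhedron_small_translate => // j jJ g0; case: notight; exists j.
  have hm : u.1 * m.1 + u.2 * m.2 = c.
    transitivity ((u.1 * a.1 + u.2 * a.2 + (u.1 * b.1 + u.2 * b.2)) / 2).
      by rewrite /m /pcomb /=; field.
    by rewrite ua ub; field.
  have := hu _ (he e _); rewrite lexx ltW // /translate /= => /(_ isT) h.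
  have h' : e * (u.1 * u.1 + u.2 * u.2) <= 0 by nra.
  have hs : u.1 * u.1 + u.2 * u.2 <= 0 by move: h'; rewrite pmulr_rle0.
  by apply: u0; apply: pt_ext => /=; nra.
exists j => //; move: gm; rewrite /m /side orient_affine.
by have := Ka j jJ; have := Kb j jJ; rewrite /side => hb ha h; split; nra.
Qed.

(** * Half-planes through edges of the inner polygon *)

Definition supporting (W : seq point) (j : point * point) :=
  [/\ j.1 <> j.2, j.1 \in W, j.2 \in W & forall z, z \in W -> 0 <= side j z].

Lemma phull_sub_polyhedron (W : seq point) J :
  (forall j, j \in J -> supporting W j) -> phull W `<=` polyhedron J.
Proof.
move=> supJ; apply: phull_min (@polyhedron_convex J) _ => z zW j /supJ[_ _ _ hW].
exact: hW.
Qed.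

(* Take the vertex [w] of [W] lowest with respect to the line [a b]; the
   wedge cut out by the two edges of [W] at [w] lies above [w]. *)
Lemma supporting_wedge (W : seq point) (a b : point) :
  (forall w, w \in W -> extreme_pt (phull W) w) -> noncollinear W ->
  exists j1 j2, [/\ supporting W j1, supporting W j2 & forall z,
    0 <= side j1 z -> 0 <= side j2 z -> exists2 w, w \in W & orient a b w <= orient a b z].
Proof.
move=> extW ncW; have [w wW wmin] := seq_argmin (orient a b) (noncollinear_neq_nil ncW).
have [wp [wm [wpW wmW wpw wmw [hwp hwm cw]]]] := vertex_neighbours wW (extW w wW) ncW.
exists (w, wp), (wm, w); split; [by split => //= /esym | by split |].
move=> z h1 h2; exists w => //; have [al [be [al0 be0 ->]]] := wedge_decomp cw h1 h2.
rewrite orient_wedge_pt; have m1 := wmin wp wpW; have m2 := wmin wm wmW.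
have : 0 <= al * (orient a b wp - orient a b w) by rewrite mulr_ge0 // subr_ge0.
have : 0 <= be * (orient a b wm - orient a b w) by rewrite mulr_ge0 // subr_ge0.
lra.
Qed.

Lemma wedge_pt0 (s p q : point) be : wedge_pt s p q 0 be = ray s q be.
Proof. by apply: pt_ext; rewrite /wedge_pt /ray /= mul0r addr0. Qed.

Lemma ray_back_fix (a q : point) be mu : 0 <= be -> 1 <= mu ->
  q = ray (ray a q be) a mu -> q = a.
Proof.
move=> be0 mu1 e; have f0 : 1 + (mu - 1) * be != 0 by rewrite gt_eqF //; nra.
have := congr1 fst e; have := congr1 snd e; rewrite /ray /= => e2 e1.
have k1 : (q.1 - a.1) * (1 + (mu - 1) * be) = 0.
  by rewrite (_ : _ * _ = q.1 - a.1 - (1 - mu) * be * (q.1 - a.1)); [rewrite {1}e1 | ]; ring.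
have k2 : (q.2 - a.2) * (1 + (mu - 1) * be) = 0.
  by rewrite (_ : _ * _ = q.2 - a.2 - (1 - mu) * be * (q.2 - a.2)); [rewrite {1}e2 | ]; ring.
move/eqP: k1; move/eqP: k2; rewrite !mulf_eq0 (negbTE f0) !orbF !subr_eq0.
by move=> /eqP e2' /eqP e1'; apply: pt_ext.
Qed.

(* If [x] were outside, the tangent from [x] would touch [V] at a vertex [a].
   Lying in the wedge of [V] at [a] and weakly right of the tangent, [x] is on
   the ray from [a] through its predecessor [sm]; but tangency puts [a] between
   [x] and [sm]. *)
Lemma phull_left_of_edges (V : seq point) (x : point) :
  (forall v, v \in V -> extreme_pt (phull V) v) -> noncollinear V ->
  (forall a, a \in V -> exists a', [/\ a' \in V, a' <> a,
       forall y, y \in V -> 0 <= orient a a' y & 0 <= orient a a' x]) ->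
  phull V x.
Proof.
move=> extV ncV hV; apply: contrapT => hx.
have [a aV ha] := exists_tangent (oner_neq0 R) (noncollinear_neq_nil ncV) hx.
have [sp [sm [spV smV sps sms [hsp hsm c0]]]] := vertex_neighbours aV (extV a aV) ncV.
have x1 : 0 <= orient a sp x.
  have [ap [apV apa hap hapx]] := hV a aV.
  have [mu mu0 hmu] := supporting_rays_eq (extV a aV) apV spV apa sps hap hsp.
  by rewrite hmu mulr_ge0 // ltW.
have x2 : 0 <= orient sm a x.
  have [ap [apV apa hap hapx]] := hV sm smV.
  have asm : a <> sm by move=> e; apply: sms; rewrite e.
  have [mu mu0 hmu] := supporting_rays_eq (extV sm smV) apV aV apa asm hap hsm.
  by rewrite hmu mulr_ge0 // ltW.
have [al [be [al0 be0 ex]]] := wedge_decomp c0 x1 x2.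
have [k1 k2] := ha sm smV; rewrite mul1r in k1.
have o_sm : orient x a sm = - al * orient a sp sm by rewrite ex /orient /wedge_pt /=; ring.
have al00 : al = 0.
  move: k1; rewrite o_sm mulNr oppr_ge0 pmulr_lle0 // => al_le0.
  by apply/eqP; rewrite eq_le al_le0 al0.
have o0 : orient x a sm = 0 by rewrite o_sm al00 oppr0 mul0r.
have [mu mu1 esm] := k2 o0.
by apply: sms; apply: (ray_back_fix be0 mu1); rewrite {1}esm ex al00 wedge_pt0.
Qed.

Lemma halfplanes_between (V W : seq point) : polygon_vertices V -> polygon_vertices W ->
  noncollinear W -> (forall w, w \in W -> phull V w) ->
  exists J, [/\ size J = (2 * size V)%N, forall j, j \in J -> supporting W j &
    polyhedron J `<=` phull V].
Proof.
move=> [_ extV] [_ extW] ncW WV; have ncV := noncollinear_phull ncW WV.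
pose left_edge a a' := [/\ a' \in V, a' <> a & forall y, y \in V -> 0 <= orient a a' y].
have [|J [sJ supJ QJ]] := choose_pairs_seq (P := supporting W) (s := V)
  (Q := fun a j1 j2 => exists a', left_edge a a' /\
          forall z, 0 <= side j1 z -> 0 <= side j2 z -> 0 <= orient a a' z).
  move=> a aV; have [ap [_ [apV _ apa _ [hap _ _]]]] := vertex_neighbours aV (extV a aV) ncV.
  have [j1 [j2 [s1 s2 wedge]]] := supporting_wedge a ap extW ncW.
  exists j1, j2; split => //; exists ap; split => // z h1 h2.
  have [w wW le_wz] := wedge z h1 h2; apply: le_trans le_wz.
  exact: phull_min (affine_pconvex_ge (c := 0) (orient_affine a ap)) hap w (WV w wW).
exists J; split => // x Kx; apply: phull_left_of_edges extV ncV _ => a aV.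
have [j1 [j2 [j1J j2J [ap [[apV apa hap] hx]]]]] := QJ a aV.
by exists ap; split => //; apply: hx; apply: Kx.
Qed.

Lemma phull_bounded (V : seq point) : bounded (phull V).
Proof.
set B := \sum_(w <- V) (`|w.1| + `|w.2|); exists B.
have cB : pconvex [set z : point | `|z.1| <= B /\ `|z.2| <= B].
  move=> a b t [ha1 ha2] [hb1 hb2] /andP[t0 t1] /=.
  move: ha1 ha2 hb1 hb2; rewrite !ler_norml.
  by move=> /andP[? ?] /andP[? ?] /andP[? ?] /andP[? ?]; split; apply/andP; split; nra.
apply: phull_min cB _ => v vV.
have vB : `|v.1| + `|v.2| <= B.
  by rewrite /B (big_rem v vV) /= lerDl sumr_ge0 // => w _; rewrite addr_ge0.
by split; apply: le_trans vB; rewrite ?lerDl ?lerDr.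
Qed.

Lemma collinear_vertices_size (S V : seq point) : ~ noncollinear S ->
  (forall w, w \in vertices S -> phull V w) -> (size (vertices S) <= 2 * size V)%N.
Proof.
move=> ncS WV; case: (vertices S) (vertices_polygon S) (vertices_sub (T := S)) WV => [//|w W'].
move=> [uW extW] WS WV.
have V0 : (0 < size V)%N by case: V WV => [/(_ w (mem_head _ _)) /phull_nil|].
apply: leq_trans (leq_pmulr 2 V0).
have [p [q [pq hl]]] : exists p q, p <> q /\ forall z, z \in S -> orient p q z = 0.
  apply: contrapT => H; apply: ncS => p q pq; apply: contrapT => H2; apply: H.
  exists p, q; split => // z zS; apply/eqP; apply: contrapT => /negP nz; apply: H2.
  by exists z.
apply: (size_extreme_on_line pq uW) => v vW.
by split; [exact: extW | exact/hl/WS].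
Qed.

Definition reduction (S V V' : seq point) :=
  [/\ polygon_vertices V', phull S `<=` phull V', phull V' `<=` phull V,
     (size V' <= 2 * size V)%N &
     forall a b, poly_edge (phull V') a b ->
       exists p q, [/\ p \in S, q \in S, p <> q, on_line p q a & on_line p q b]].

Lemma collinear_reduction (S V : seq point) : ~ noncollinear S ->
  (forall z, z \in S -> phull V z) -> exists V', reduction S V V'.
Proof.
move=> ncS SV; have WV w : w \in vertices S -> phull V w by move=> /vertices_sub /SV.
exists (vertices S); split; first exact: vertices_polygon.
- by rewrite phull_vertices.
- exact: phull_min (phull_convex (T := V)) WV.
- exact: collinear_vertices_size.
- move=> a b [ab [/mem_extreme_phull /vertices_sub aS [/mem_extreme_phull /vertices_sub bS _]]].
  by exists a, b; split => //; [exact: orient_pp | exact: orient_qq].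
Qed.

Lemma noncollinear_reduction (S V : seq point) : polygon_vertices V -> noncollinear S ->
  (forall z, z \in S -> phull V z) -> exists V', reduction S V V'.
Proof.
move=> polyV ncS SV; have WV w : w \in vertices S -> phull V w by move=> /vertices_sub /SV.
have SW z : z \in S -> phull (vertices S) z by apply: phull_vertices_mem.
have [J [sJ supJ JV]] :=
  halfplanes_between polyV (vertices_polygon S) (noncollinear_phull ncS SW) WV.
have hJ j : j \in J -> j.1 <> j.2 by case/supJ.
have bJ : bounded (polyhedron J) by have [B hB] := phull_bounded V; exists B => z /JV /hB.
have eqK := phull_poly_vertices hJ bJ.
exists (poly_vertices J); rewrite /reduction eqK; split => //.
- by split=> [|v]; [exact: undup_uniq | rewrite eqK; exact: poly_vertices_extreme].
- by rewrite -(phull_vertices S); exact: phull_sub_polyhedron supJ.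
- by rewrite -sJ size_poly_vertices.
- move=> a b /poly_edge_tight[j jJ [ha hb]]; have [jn j1W j2W _] := supJ j jJ.
  by exists j.1, j.2; split => //; apply: vertices_sub.
Qed.

End Plane.

Theorem lemma3p4 (R : realType) (P : seq (pt R)) (C : set (pt R)) (V : seq (pt R)) :
  convex_body C ->
  polygon_vertices V ->
  (forall p, p \in P -> C p -> phull V p) ->
  phull V `<=` C ->
  exists V' : seq (pt R),
    polygon_vertices V' /\
    (forall p, p \in P -> C p -> phull V' p) /\
    phull V' `<=` phull V /\
    (size V' <= 2 * size V)%N /\
    (forall a b, poly_edge (phull V') a b ->
       exists p q, [/\ p \in P, q \in P, p <> q, on_line p q a & on_line p q b]).
Proof.
move=> _ polyV PV _; set S := [seq p <- P | `[< C p >]].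
have SP : {subset S <= P} by move=> p; rewrite mem_filter => /andP[].
have PS p : p \in P -> C p -> p \in S by move=> pP Cp; rewrite mem_filter pP andbT; apply/asboolP.
have SV z : z \in S -> phull V z by rewrite mem_filter => /andP[/asboolP Cz zP]; apply: PV.
have [V' [polyV' SV' V'V sizeV' edgeV']] : exists V', reduction S V V'.
  case: (pselect (noncollinear S)) => ncS.
    exact: noncollinear_reduction.
  exact: collinear_reduction.
exists V'; split => //.
split; first by move=> p pP Cp; apply: SV'; apply: phull_mem; apply: PS.
split => //; split => //.
move=> a b /edgeV'[p [q [pS qS pq hpa hpb]]].
by exists p, q; split => //; apply: SP.
Qed.
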